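(* Let $\alpha\neq\beta$ be complex numbers and let $(g_n)_{n\ge0}$ be the polynomials defined in the context. Then $$g_n(\alpha)=\frac{1}{n}\sum_{k=0}^{n-1}\binom{n}{k}\binom{n}{k+1}\beta^{n-k}\alpha^{k}\qquad (n\ge1),\qquad g_0(\alpha)=1 .$$
   Context: Fix complex numbers $\alpha\neq\beta$. Define polynomials $g_n(x)\in\mathbb{C}[x]$ recursively by $g_0(x)=1$ and, for $n\ge1$, $$(x-\alpha)(\alpha-\beta)^{n-1}g_n(x)=\alpha(x-\beta)^n g_{n-1}(\alpha)-x(\alpha-\beta)^n g_{n-1}(x).$$ (The right-hand side vanishes at $x=\alpha$, so it is divisible by $x-\alpha$ and $g_n$ is a uniquely determined polynomial.) Here $g_n(\alpha)$ denotes the value of the polynomial $g_n$ at $x=\alpha$. *)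

From HB Require Import structures.
From mathcomp Require Import all_boot all_order all_algebra.
From mathcomp Require Import complex.
From mathcomp Require Import Rstruct.
From Stdlib Require Rdefinitions.
Set Implicit Arguments. Unset Strict Implicit. Unset Printing Implicit Defensive.
Import Order.TTheory GRing.Theory Num.Theory.

Definition Cplx : Type := complex Rdefinitions.R.

From HB Require Import structures.
From mathcomp Require Import all_boot all_order all_algebra.
From mathcomp Require Import complex.
From mathcomp Require Import Rstruct.
From mathcomp Require Import ring zify.
Import Order.TTheory GRing.Theory Num.Theory.
Local Open Scope ring_scope.

(* Substituting x = b + (a - b) T turns the recurrence into
     (T - 1) G_(n+1)(T) = a G_n(1) T^(n+1) - (b + (a - b) T) G_n(T),
   and g_n(a) into G_n(1).  This recurrence has an explicit solution: the
   coefficient of T^j in G_n is sum_k (c(j,k) c(n,k+1) - c(j,k+1) c(n,k)) a^k b^(n-k),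
   where c(j,k) = 'C(j-1,k-1).  All coefficients of the recurrence then follow
   from Pascal's rule for c, except the leading one, which is forced by the
   vanishing of the left-hand side at T = 1.  Summing the coefficients over j
   telescopes c(j,k) into c(j+1,k+1) (hockey stick), and n times the resulting
   2x2 determinant of binomials is the Narayana product 'C(n,k) 'C(n,k+1). *)

Definition cbin (j k : nat) : nat :=
  match j, k with
  | 0, 0 => 1
  | j'.+1, k'.+1 => 'C(j', k')
  | _, _ => 0
  end.

Arguments cbin : simpl never.

Lemma cbinS0 n : cbin n.+1 0 = 0%N.
Proof. by []. Qed.

Lemma cbinS1 n : cbin n.+1 1 = 1%N.
Proof. exact: bin0. Qed.

Lemma cbinSS j k : cbin j.+1 k.+1 = (cbin j k.+1 + cbin j k)%N.
Proof. by case: j => [|j]; case: k => [|k]; rewrite /cbin /= ?bin0 ?bin0n. Qed.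

Lemma cbin_small j k : (j < k)%N -> cbin j k = 0%N.
Proof. by case: j => [|j]; case: k => // k; rewrite ltnS /cbin => /bin_small. Qed.

Lemma sum_cbin n k : (\sum_(j < n) cbin j k)%N = cbin n k.+1.
Proof.
elim: n => [|n IHn]; first by rewrite big_ord0.
by rewrite big_ord_recr /= IHn -cbinSS.
Qed.

Lemma cbin_det (R : comNzRingType) n k : (0 < n)%N ->
  n%:R * ((cbin n.+1 k.+1)%:R * (cbin n k.+1)%:R
          - (cbin n.+1 k.+2)%:R * (cbin n k)%:R)
  = 'C(n, k)%:R * 'C(n, k.+1)%:R :> R.
Proof.
case: n => // n _; case: k => [|k]; rewrite /cbin /=.
  by rewrite !bin0 bin1 mulr0 subr0 !mul1r mulr1.
have natrE (m p : nat) : m = p -> m%:R = p%:R :> R by move->.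
have := natrE _ _ (mul_bin_down n.+1 k.+1).
have := natrE _ _ (mul_bin_diag n.+1 k).
have := natrE _ _ (mul_bin_left n.+1 k.+1).
rewrite /= !natrM => h_left h_diag h_down.
have -> : n.+1%:R * ('C(n.+1, k.+1)%:R * 'C(n, k.+1)%:R
                    - 'C(n.+1, k.+2)%:R * 'C(n, k)%:R)
  = 'C(n.+1, k.+1)%:R * (n.+1%:R * 'C(n, k.+1)%:R)
    - 'C(n.+1, k.+2)%:R * (n.+1%:R * 'C(n, k)%:R) :> R by ring.
rewrite h_down h_diag -h_left -[k.+2]addn1 -[k.+1]addn1 !natrD; ring.
Qed.

Section HomogeneousSums.

Context {R : comNzRingType} (a b : R).

Definition hsum n (f : nat -> R) : R :=
  \sum_(k < n.+1) f k * (a ^+ k * b ^+ (n - k)).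

Lemma hsumD n f h : hsum n (fun k => f k + h k) = hsum n f + hsum n h.
Proof. by rewrite -big_split; apply: eq_bigr => k _; rewrite mulrDl. Qed.

Lemma hsumB n f h : hsum n (fun k => f k - h k) = hsum n f - hsum n h.
Proof. by rewrite -sumrB; apply: eq_bigr => k _; rewrite mulrBl. Qed.

Lemma hsum0 n f : (forall k, f k = 0) -> hsum n f = 0.
Proof. by move=> f0; apply: big1 => k _; rewrite f0 mul0r. Qed.

Lemma hsum_mulb n f : f n.+1 = 0 -> b * hsum n f = hsum n.+1 f.
Proof.
move=> fn0; rewrite /hsum [RHS]big_ord_recr /= fn0 mul0r addr0 mulr_sumr.
by apply: eq_bigr => k _; rewrite subSn 1?exprS; [ring | rewrite -ltnS].
Qed.

Lemma hsum_mula n f :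
  a * hsum n f = hsum n.+1 (fun k => if k is k'.+1 then f k' else 0).
Proof.
rewrite /hsum [RHS]big_ord_recl /= mul0r add0r mulr_sumr.
by apply: eq_bigr => k _; rewrite /bump /= add1n subSS exprS; ring.
Qed.

End HomogeneousSums.

Section NarayanaPolynomials.

Context {R : comNzRingType} (a b : R).

Definition hdet n j k : R :=
  (cbin j k)%:R * (cbin n k.+1)%:R - (cbin j k.+1)%:R * (cbin n k)%:R.

Lemma hdet_diag n k : hdet n n k = 0.
Proof. by rewrite /hdet mulrC subrr. Qed.

Lemma hdet_out n j : hdet n j n.+1 = 0.
Proof. by rewrite /hdet !(@cbin_small n) // !mulr0 subrr. Qed.

Lemma hdet_recurrence n j k : (0 < n)%N ->
  hdet n.+1 j k - hdet n.+1 j.+1 k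
  + (hdet n j.+1 k - hdet n j k + if k is k'.+1 then hdet n j k' else 0) = 0.
Proof.
case: k => [|k] n_gt0; last first.
  by rewrite /hdet !(cbinSS n) !(cbinSS j) !natrD; ring.
by case: n n_gt0 => // n _; rewrite /hdet !cbinS0 !cbinS1; ring.
Qed.

Definition hcoef n j : R := hsum a b n (hdet n j).

Lemma hcoef_diag n : hcoef n n = 0.
Proof. by apply: hsum0 => k; rewrite hdet_diag. Qed.

Lemma hcoef0 n : (0 < n)%N -> hcoef n 0 = b ^+ n.
Proof.
case: n => // n _; rewrite /hcoef /hsum big_ord_recl big1 => [|k _].
  by rewrite /hdet cbinS0 cbinS1 subn0 /cbin /=; ring.
by rewrite /hdet !(@cbin_small 0) //; ring.
Qed.

Lemma hcoef_recurrence n j : (0 < n)%N ->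
  hcoef n.+1 j - hcoef n.+1 j.+1 + b * hcoef n j.+1 + (a - b) * hcoef n j = 0.
Proof.
move=> n_gt0.
have -> (u v w z : R) : u - v + b * w + (a - b) * z
                         = u - v + (b * (w - z) + a * z) by ring.
rewrite /hcoef -!hsumB hsum_mulb; last by rewrite /= !hdet_out subrr.
rewrite hsum_mula -!hsumD; apply: hsum0 => k.
exact: hdet_recurrence.
Qed.

(* G_n of the substitution x = b + (a - b) T; the coefficient formula is only
   valid for n > 0 (it would give G_0 = 0). *)
Definition hpoly n : {poly R} :=
  if n is 0 then 1 else \poly_(j < n.+1) hcoef n j.

Lemma coef_hpoly n i : (0 < n)%N ->
  (hpoly n)`_i = if (i <= n)%N then hcoef n i else 0.
Proof. by case: n => // n _; rewrite coef_poly. Qed.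

Lemma hpoly1 : hpoly 1 = b%:P.
Proof.
apply/polyP => i; rewrite coef_hpoly // coefC.
by case: i => [|[|i]] //=; rewrite ?hcoef0 ?expr1 ?hcoef_diag.
Qed.

Lemma hpoly_recurrence n :
  ('X - 1) * hpoly n.+1
  = (a * (hpoly n).[1])%:P * 'X^(n.+1) - (b%:P + (a - b)%:P * 'X) * hpoly n.
Proof.
case: n => [|n]; first by rewrite hpoly1 /= hornerC polyCB; ring.
apply/eqP; rewrite -subr_eq0; apply/eqP.
set e := _ - _.
have coef_e i : i != n.+2 -> e`_i = 0.
  move=> i_neq; rewrite /e !(mulrBl, mulrDl) mul1r !(coefB, coefD).
  rewrite coefXM coefCM coefXn (negbTE i_neq) mulr0 sub0r coefCM.
  rewrite -mulrA coefCM coefXM !coef_hpoly //.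
  case: i i_neq => [|i] i_neq /=; first by rewrite !hcoef0 // exprS; ring.
  case: (ltngtP i n.+1) => [i_lt | i_gt | i_eq]; last by rewrite i_eq eqxx in i_neq.
    have [-> ->] : (i <= n.+2)%N /\ (i < n.+2)%N by lia.
    by rewrite -[RHS](hcoef_recurrence n.+1 i) //; ring.
  have -> : (i < n.+2)%N = false by lia.
  case: leqP => [i_le | _]; last by ring.
  have -> : i = n.+2 by lia.
  by rewrite hcoef_diag; ring.
(* The leading coefficient is not reached by the coefficient recurrence;
   it vanishes because both sides of the identity vanish at 1. *)
have e_monomial : e = e`_n.+2 *: 'X^(n.+2).
  apply/polyP => i; rewrite coefZ coefXn.
  by case: eqVneq => [->|/coef_e ->]; rewrite ?mulr1 ?mulr0.
have : e.[1] = 0.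
  by rewrite /e !(hornerXn, hornerD, hornerN, hornerM, hornerX, hornerC) expr1n; ring.
rewrite {1}e_monomial hornerZ hornerXn expr1n mulr1 => top0.
by rewrite e_monomial top0 scale0r.
Qed.

Lemma sum_hdet n k : \sum_(j < n.+1) hdet n j k
  = (cbin n.+1 k.+1)%:R * (cbin n k.+1)%:R - (cbin n.+1 k.+2)%:R * (cbin n k)%:R.
Proof. by rewrite /hdet sumrB -!mulr_suml -!natr_sum !sum_cbin. Qed.

Lemma hpoly_at1 n : (0 < n)%N ->
  n%:R * (hpoly n).[1]
  = \sum_(k < n) ('C(n, k)%:R * 'C(n, k.+1)%:R * b ^+ (n - k) * a ^+ k).
Proof.
case: n => // n _; rewrite /hpoly horner_poly.
under eq_bigr do rewrite expr1n mulr1.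
rewrite /hcoef /hsum exchange_big /=.
under eq_bigr do rewrite -mulr_suml sum_hdet.
rewrite big_ord_recr (@cbin_small n.+1 n.+2) ?(@cbin_small n.+2 n.+3) //.
rewrite /= mulr0 mul0r subrr mul0r addr0.
rewrite mulr_sumr; apply: eq_bigr => k _.
by rewrite -cbin_det //; ring.
Qed.

End NarayanaPolynomials.

Lemma affine_recurrence {R : comNzRingType} {n : nat} {x t a b c d u v : R} :
  x = d * t + b -> a = d + b ->
  (t - 1) * v = c * t ^+ n.+1 - (b + (a - b) * t) * u ->
  (x - a) * d ^+ n * v = c * (x - b) ^+ n.+1 - x * d ^+ n.+1 * u.
Proof.
move=> -> -> rec_t.
have -> : (d * t + b - (d + b)) * d ^+ n * v = d ^+ n.+1 * ((t - 1) * v).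
  by rewrite exprS; ring.
by rewrite rec_t !addrK exprMn; ring.
Qed.

Lemma recursion_solution {F : fieldType} (a b : F) (g : nat -> {poly F}) :
  a != b -> g 0%N = 1 ->
  (forall n, ('X - a%:P) * ((a - b) ^+ n)%:P * g n.+1
             = (a * (g n).[a])%:P * ('X - b%:P) ^+ n.+1
               - 'X * ((a - b) ^+ n.+1)%:P * g n) ->
  forall n, g n = hpoly a b n \Po ((a - b)^-1 *: ('X - b%:P)).
Proof.
move=> ab g0 rec; set d := a - b; set T := _ *: _.
have d_neq0 : d != 0 by rewrite subr_eq0.
have T_a : T.[a] = 1 by rewrite /T hornerZ hornerXsubC mulVf.
have XE : 'X = d%:P * T + b%:P by rewrite /T mul_polyC scalerA mulfV ?scale1r ?subrK.
have aE : a%:P = d%:P + b%:P by rewrite -polyCD subrK.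
elim=> [|n IHn]; first by rewrite g0 -polyC1 comp_polyC.
have gn_a : (g n).[a] = (hpoly a b n).[1] by rewrite IHn horner_comp T_a.
have := congr1 (comp_poly T) (hpoly_recurrence a b n).
rewrite !(comp_polyB, comp_polyM, comp_polyD, comp_polyX, comp_polyC, rmorph1).
have XnT : 'X^(n.+1) \Po T = T ^+ n.+1 by rewrite rmorphXn /= comp_polyX.
rewrite XnT polyCB -IHn -gn_a => rec_T.
have := affine_recurrence XE aE rec_T; rewrite -!rmorphXn -rec => rec_eq.
apply: (mulfI (x := ('X - a%:P) * (d ^+ n)%:P)); last exact: esym rec_eq.
by rewrite mulf_neq0 ?polyXsubC_eq0 ?polyC_eq0 ?expf_neq0.
Qed.

Theorem mainTheorem1 (alpha beta : Cplx) (g : nat -> {poly Cplx}) :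
  alpha != beta ->
  g 0%N = 1 ->
  (forall n : nat,
      ('X - alpha%:P) * ((alpha - beta) ^+ n)%:P * g n.+1
      = (alpha * (g n).[alpha])%:P * ('X - beta%:P) ^+ n.+1
        - 'X * ((alpha - beta) ^+ n.+1)%:P * g n) ->
  (g 0%N).[alpha] = 1 /\
  (forall n : nat, (0 < n)%N ->
     (g n).[alpha]
     = (n%:R)^-1 * \sum_(k < n) ('C(n, k)%:R * 'C(n, k.+1)%:R
                                 * beta ^+ (n - k) * alpha ^+ k)).
Proof.
move=> alpha_neq_beta g0 rec; split; first by rewrite g0 hornerC.
move=> n n_gt0; have n_neq0 : n%:R != 0 :> Cplx by rewrite pnatr_eq0 -lt0n.
rewrite (recursion_solution alpha beta g) // horner_comp hornerZ.
by rewrite hornerXsubC mulVf ?subr_eq0 // -hpoly_at1 // mulKf.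
Qed.
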